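(* Let $\theta$ be the parameters of an Elman RNN with $L$ layers such that every bias vector $\mathbf{b}^\ell$ ($0\le\ell\le L-1$) has all entries nonzero. Define $$\|\theta\|_2^2=\|\mathbf{W}_{\mathrm{ff}}^{L-1}\|_F^2+\|\mathbf{b}^{L-1}\|^2+\sum_{0<\ell<L}\left(\|\mathbf{W}_{\mathrm{rec}}^{\ell}\|_F^2+\|\mathbf{W}_{\mathrm{ff}}^{\ell-1}\|_F^2+\|\mathbf{b}^{\ell-1}\|^2\right),$$ and let $\mathcal{X}(\theta)$ be the set of $\theta'$ that minimize $\|\theta'\|_2$ subject to $\theta'=\mathcal{P}(\theta)$ for some $\mathcal{P}\in\mathcal{G}_{\mathrm{scaled}}$. Then for every $\theta',\theta''\in\mathcal{X}(\theta)$ there exists $\mathcal{P}\in\mathcal{G}_{\mathrm{perm}}$ (a transformation by unscaled permutations only) such that $\theta'=\mathcal{P}(\theta'')$.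
   Context: Elman RNN: parameters $\theta=(\mathbf{W}_{\mathrm{rec}}^{\ell+1},\mathbf{W}_{\mathrm{ff}}^{\ell},\mathbf{b}^{\ell})_{0\le\ell\le L-1}$ with $\mathbf{W}_{\mathrm{ff}}^{\ell}\in\mathbb{R}^{d_{\ell+1}\times d_\ell}$, $\mathbf{W}_{\mathrm{rec}}^{\ell+1}\in\mathbb{R}^{d_{\ell+1}\times d_{\ell+1}}$, $\mathbf{b}^\ell\in\mathbb{R}^{d_{\ell+1}}$. $\mathcal{G}_{\mathrm{lin}}$ is the set of sequences $\mathcal{P}=(\mathbf{P}^0,\dots,\mathbf{P}^L)$ with $\mathbf{P}^0=\mathbf{I}_{d_0}$, $\mathbf{P}^L=\mathbf{I}_{d_L}$ and $\mathbf{P}^\ell$ invertible $d_\ell\times d_\ell$ for $1\le\ell\le L-1$; it acts on $\theta$ by replacing, for each $1\le\ell\le L$, $(\mathbf{W}_{\mathrm{rec}}^{\ell},\mathbf{W}_{\mathrm{ff}}^{\ell-1},\mathbf{b}^{\ell-1})$ with $(\mathbf{P}^\ell\mathbf{W}_{\mathrm{rec}}^{\ell}(\mathbf{P}^\ell)^{-1},\ \mathbf{P}^\ell\mathbf{W}_{\mathrm{ff}}^{\ell-1}(\mathbf{P}^{\ell-1})^{-1},\ \mathbf{P}^\ell\mathbf{b}^{\ell-1})$, giving $\mathcal{P}(\theta)$. $\mathcal{G}_{\mathrm{perm}}\subset\mathcal{G}_{\mathrm{lin}}$: all $\mathbf{P}^\ell$ ($1\le\ell\le L-1$) are permutation matrices.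 $\mathcal{G}_{\mathrm{scaled}}\subset\mathcal{G}_{\mathrm{lin}}$: each $\mathbf{P}^\ell=\tilde{\mathbf{P}}^\ell\mathbf{D}^\ell$ with $\tilde{\mathbf{P}}^\ell$ a permutation matrix and $\mathbf{D}^\ell$ diagonal with strictly positive diagonal entries. *)

From HB Require Import structures.
From mathcomp Require Import all_boot all_order all_algebra.
From mathcomp Require Import perm.
From mathcomp Require Import reals.
Set Implicit Arguments. Unset Strict Implicit. Unset Printing Implicit Defensive.
Import Order.TTheory GRing.Theory Num.Theory.
Local Open Scope ring_scope.

(* Only the indices in range are meaningful:
     Wff l  : d(l+1) x d l      for 0 <= l <= L-1   (W_ff^l)
     Wrec l : d l x d l         for 1 <= l <= L     (W_rec^l)
     bias l : d(l+1) column     for 0 <= l <= L-1   (b^l)          *)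
Record rnn (R : Type) (d : nat -> nat) := RNN {
  Wff  : forall l : nat, 'M[R]_(d l.+1, d l);
  Wrec : forall l : nat, 'M[R]_(d l);
  bias : forall l : nat, 'cV[R]_(d l.+1)
}.

Definition rnn_eq (R : Type) (d : nat -> nat) (L : nat) (t1 t2 : rnn R d) : Prop :=
  forall l, (l < L)%N ->
    Wff t1 l = Wff t2 l /\ Wrec t1 l.+1 = Wrec t2 l.+1 /\ bias t1 l = bias t2 l.

Definition mxseq (R : Type) (d : nat -> nat) := forall l : nat, 'M[R]_(d l).

Definition in_Glin (R : comUnitRingType) (d : nat -> nat) (L : nat) (P : mxseq R d) : Prop :=
  P 0%N = 1%:M /\ P L = 1%:M /\
  (forall l, (0 < l < L)%N -> P l \in unitmx).

Definition in_Gperm (R : comUnitRingType) (d : nat -> nat) (L : nat) (P : mxseq R d) : Prop :=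
  in_Glin L P /\ (forall l, (0 < l < L)%N -> is_perm_mx (P l)).

Definition in_Gscaled (R : numFieldType) (d : nat -> nat) (L : nat) (P : mxseq R d) : Prop :=
  in_Glin L P /\
  (forall l, (0 < l < L)%N ->
     exists (s : 'S_(d l)) (D : 'rV[R]_(d l)),
       (forall i, 0 < D 0 i) /\ P l = perm_mx s *m diag_mx D).

Definition rnn_act (R : comUnitRingType) (d : nat -> nat) (P : mxseq R d) (t : rnn R d) : rnn R d :=
  @RNN R d
    (fun l => P l.+1 *m Wff t l *m invmx (P l))
    (fun l => P l *m Wrec t l *m invmx (P l))
    (fun l => P l.+1 *m bias t l).

Definition frob2 (R : ringType) (m n : nat) (A : 'M[R]_(m, n)) : R :=
  \sum_(i < m) \sum_(j < n) A i j ^+ 2.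

(* ||theta||_2^2 as in the paper (note: W_rec^L is not included). *)
Definition rnn_norm2 (R : ringType) (d : nat -> nat) (L : nat) (t : rnn R d) : R :=
  frob2 (Wff t L.-1) + frob2 (bias t L.-1) +
  \sum_(1 <= l < L) (frob2 (Wrec t l) + frob2 (Wff t l.-1) + frob2 (bias t l.-1)).

Definition rnn_norm (R : realType) (d : nat -> nat) (L : nat) (t : rnn R d) : R :=
  Num.sqrt (rnn_norm2 L t).

Definition in_X (R : realType) (d : nat -> nat) (L : nat) (t t' : rnn R d) : Prop :=
  (exists P : mxseq R d, in_Gscaled L P /\ rnn_eq L t' (rnn_act P t)) /\
  (forall P : mxseq R d, in_Gscaled L P -> rnn_norm L t' <= rnn_norm L (rnn_act P t)).

(* Permutation factors do not change the Frobenius norms, so the norm of a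
   G_scaled-transform of theta only depends on its positive diagonal factors
   delta^l, through the entries delta^(l+1)_i w_ij / delta^l_j and
   delta^(l+1)_i b_i.  If two scalings delta, delta' both attain the minimum,
   so does their entrywise geometric mean, and the identity
   x^2 + y^2 = 2 (sqrt(xy))^2 + (x - y)^2 applied entry by entry gives
   N(delta) + N(delta') = 2 N(sqrt(delta delta')) + |delta.theta - delta'.theta|^2.
   Minimality forces the last term to vanish; in particular
   delta^(l+1) b^l = delta'^(l+1) b^l, so nonzero biases give delta = delta',
   and the quotient of the two scaled permutations is a plain permutation. *)

From HB Require Import structures.
From mathcomp Require Import all_boot all_order all_algebra.
From mathcomp Require Import perm reals ring lra.
Set Implicit Arguments. Unset Strict Implicit. Unset Printing Implicit Defensive.
Import Order.TTheory GRing.Theory Num.Theory.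
Local Open Scope ring_scope.

Section FrobeniusRing.
Variable R : comNzRingType.

Lemma frob2_perml m n (s : 'S_m) (A : 'M[R]_(m, n)) :
  frob2 (perm_mx s *m A) = frob2 A.
Proof.
rewrite -row_permE /frob2 [RHS](reindex_inj (@perm_inj _ s)) /=.
by apply: eq_bigr => i _; apply: eq_bigr => j _; rewrite mxE.
Qed.

Lemma frob2_permr m n (s : 'S_n) (A : 'M[R]_(m, n)) :
  frob2 (A *m perm_mx s) = frob2 A.
Proof.
rewrite -[s]invgK -col_permE /frob2.
apply: eq_bigr => i _; rewrite [RHS](reindex_inj (@perm_inj _ s^-1)) /=.
by apply: eq_bigr => j _; rewrite mxE.
Qed.

Lemma frob2_polar m n (A B C : 'M[R]_(m, n)) :
  (forall i j, C i j ^+ 2 = A i j * B i j) ->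
  frob2 A + frob2 B = frob2 C *+ 2 + frob2 (A - B).
Proof.
move=> CAB; rewrite /frob2 -big_split -sumrMnl -big_split /=.
apply: eq_bigr => i _; rewrite -big_split -sumrMnl -big_split /=.
by apply: eq_bigr => j _; rewrite CAB !mxE; ring.
Qed.

End FrobeniusRing.

Section FrobeniusNum.
Variable R : realDomainType.

Lemma frob2_ge0 m n (A : 'M[R]_(m, n)) : 0 <= frob2 A.
Proof. by apply: sumr_ge0 => i _; apply: sumr_ge0 => j _; apply: sqr_ge0. Qed.

Lemma frob2_eq0 m n (A : 'M[R]_(m, n)) : frob2 A = 0 -> A = 0.
Proof.
move=> /eqP; rewrite psumr_eq0 => [/allP A0|i _]; last first.
  by apply: sumr_ge0 => j _; apply: sqr_ge0.
apply/matrixP => i j; rewrite mxE; move: (A0 i (mem_index_enum _)) => /=.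
rewrite psumr_eq0 => [/allP/(_ j (mem_index_enum _))|k _]; last exact: sqr_ge0.
by rewrite /= sqrf_eq0 => /eqP.
Qed.

End FrobeniusNum.

Section ColumnSums.
Variable R : nzRingType.

(* The column sums of a scaled permutation matrix are its diagonal factor: this
   reads off the scaling of an element of G_scaled without any choice. *)
Definition col_sums m n (A : 'M[R]_(m, n)) : 'rV[R]_n := \row_j \sum_i A i j.

Lemma col_sums_perml m n (s : 'S_m) (A : 'M[R]_(m, n)) :
  col_sums (perm_mx s *m A) = col_sums A.
Proof.
apply/matrixP => i j; rewrite !mxE -row_permE.
rewrite [RHS](reindex_inj (@perm_inj _ s)) /=.
by apply: eq_bigr => k _; rewrite mxE.
Qed.

Lemma col_sums_diag n (D : 'rV[R]_n) : col_sums (diag_mx D) = D.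
Proof.
apply/matrixP => i j; rewrite ord1 mxE (bigD1 j) //= big1 ?addr0 => [|k /negPf kj].
  by rewrite mxE eqxx.
by rewrite mxE kj.
Qed.

Lemma col_sums_perm_diag n (s : 'S_n) (D : 'rV[R]_n) :
  col_sums (perm_mx s *m diag_mx D) = D.
Proof. by rewrite col_sums_perml col_sums_diag. Qed.

End ColumnSums.

Section PermDiag.
Variable R : fieldType.

Lemma diag_mxV n (D : 'rV[R]_n) : (forall i, D 0 i != 0) ->
  diag_mx D *m diag_mx (map_mx GRing.inv D) = 1%:M.
Proof.
move=> D_neq0; rewrite mulmx_diag -diag_const_mx; congr diag_mx.
by apply/matrixP => i j; rewrite !mxE divff.
Qed.

Lemma perm_diag_mulV n (s : 'S_n) (D : 'rV[R]_n) : (forall i, D 0 i != 0) ->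
  perm_mx s *m diag_mx D *m (diag_mx (map_mx GRing.inv D) *m perm_mx s^-1) = 1%:M.
Proof.
move=> D_neq0; rewrite -mulmxA (mulmxA (diag_mx D)) diag_mxV // mul1mx.
by rewrite -perm_mxM mulgV perm_mx1.
Qed.

Lemma perm_diag_unit n (s : 'S_n) (D : 'rV[R]_n) : (forall i, D 0 i != 0) ->
  perm_mx s *m diag_mx D \in unitmx.
Proof. by move=> D_neq0; have [] := mulmx1_unit (perm_diag_mulV s D_neq0). Qed.

Lemma invmx_perm_diag n (s : 'S_n) (D : 'rV[R]_n) : (forall i, D 0 i != 0) ->
  invmx (perm_mx s *m diag_mx D) = diag_mx (map_mx GRing.inv D) *m perm_mx s^-1.
Proof.
move=> D_neq0; rewrite -[RHS]mul1mx -(mulVmx (perm_diag_unit s D_neq0)) -mulmxA.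
by rewrite perm_diag_mulV // mulmx1.
Qed.

Lemma invmx_diag n (D : 'rV[R]_n) : (forall i, D 0 i != 0) ->
  invmx (diag_mx D) = diag_mx (map_mx GRing.inv D).
Proof.
by move=> D_neq0; have := invmx_perm_diag 1 D_neq0; rewrite invg1 !perm_mx1 mul1mx mulmx1.
Qed.

Lemma perm_diag_divr n (s1 s2 : 'S_n) (D : 'rV[R]_n) : (forall i, D 0 i != 0) ->
  perm_mx s1 *m diag_mx D *m invmx (perm_mx s2 *m diag_mx D) = perm_mx (s1 * s2^-1).
Proof.
move=> D_neq0; rewrite invmx_perm_diag // mulmxA -(mulmxA _ (diag_mx D)) diag_mxV //.
by rewrite mulmx1 perm_mxM.
Qed.

Lemma frob2_perm_diag_conj m n (s1 : 'S_m) (s0 : 'S_n) (D1 : 'rV[R]_m) (D0 : 'rV[R]_n)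
    (A : 'M[R]_(m, n)) : (forall i, D0 0 i != 0) ->
  frob2 (perm_mx s1 *m diag_mx D1 *m A *m invmx (perm_mx s0 *m diag_mx D0)) =
  frob2 (diag_mx D1 *m A *m invmx (diag_mx D0)).
Proof.
move=> D0_neq0; rewrite invmx_perm_diag // invmx_diag // !mulmxA frob2_permr.
by rewrite -!mulmxA frob2_perml.
Qed.

Lemma diag_conj_entry m n (D1 : 'rV[R]_m) (D0 : 'rV[R]_n) (A : 'M[R]_(m, n)) i j :
  (forall i, D0 0 i != 0) ->
  (diag_mx D1 *m A *m invmx (diag_mx D0)) i j = D1 0 i * A i j / D0 0 j.
Proof. by move=> D0_neq0; rewrite invmx_diag // mul_mx_diag mul_diag_mx !mxE. Qed.

End PermDiag.

Section GeometricMean.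
Variable R : rcfType.

Definition geomean n (D1 D2 : 'rV[R]_n) : 'rV[R]_n :=
  \row_j Num.sqrt (D1 0 j * D2 0 j).

Lemma geomean_gt0 n (D1 D2 : 'rV[R]_n) :
  (forall i, 0 < D1 0 i) -> (forall i, 0 < D2 0 i) -> forall i, 0 < geomean D1 D2 0 i.
Proof. by move=> D1_gt0 D2_gt0 i; rewrite mxE sqrtr_gt0 mulr_gt0. Qed.

Lemma geomean1 n : geomean (const_mx 1) (const_mx 1) = const_mx 1 :> 'rV[R]_n.
Proof. by apply/matrixP => i j; rewrite !mxE mulr1 sqrtr1. Qed.

Lemma sqr_geomean_scale (a1 a2 b1 b2 w : R) :
  0 < a1 -> 0 < a2 -> 0 < b1 -> 0 < b2 ->
  (Num.sqrt (a1 * a2) * w / Num.sqrt (b1 * b2)) ^+ 2 = (a1 * w / b1) * (a2 * w / b2).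
Proof.
move=> a1_gt0 a2_gt0 b1_gt0 b2_gt0.
rewrite expr_div_n exprMn !sqr_sqrtr ?mulr_ge0 ?ltW //.
by field; rewrite !gt_eqF.
Qed.

Lemma sqr_geomean_mul (a1 a2 w : R) : 0 <= a1 -> 0 <= a2 ->
  (Num.sqrt (a1 * a2) * w) ^+ 2 = (a1 * w) * (a2 * w).
Proof. by move=> a1_ge0 a2_ge0; rewrite exprMn sqr_sqrtr ?mulr_ge0 //; ring. Qed.

Lemma sqr_geomean_conj m n (a1 a2 : 'rV[R]_m) (b1 b2 : 'rV[R]_n) (A : 'M[R]_(m, n)) i j :
  (forall i, 0 < a1 0 i) -> (forall i, 0 < a2 0 i) ->
  (forall j, 0 < b1 0 j) -> (forall j, 0 < b2 0 j) ->
  (diag_mx (geomean a1 a2) *m A *m invmx (diag_mx (geomean b1 b2))) i j ^+ 2 =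
  (diag_mx a1 *m A *m invmx (diag_mx b1)) i j *
  (diag_mx a2 *m A *m invmx (diag_mx b2)) i j.
Proof.
move=> a1_gt0 a2_gt0 b1_gt0 b2_gt0.
have b1_neq0 k : b1 0 k != 0 by rewrite gt_eqF.
have b2_neq0 k : b2 0 k != 0 by rewrite gt_eqF.
have b_neq0 k : geomean b1 b2 0 k != 0 by rewrite gt_eqF ?geomean_gt0.
rewrite !diag_conj_entry // !mxE.
exact: sqr_geomean_scale.
Qed.

Lemma sqr_geomean_mull m n (a1 a2 : 'rV[R]_m) (B : 'M[R]_(m, n)) i j :
  (forall i, 0 < a1 0 i) -> (forall i, 0 < a2 0 i) ->
  (diag_mx (geomean a1 a2) *m B) i j ^+ 2 = (diag_mx a1 *m B) i j * (diag_mx a2 *m B) i j.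
Proof.
by move=> a1_gt0 a2_gt0; rewrite !mul_diag_mx !mxE sqr_geomean_mul ?ltW.
Qed.

End GeometricMean.

Section RNNNorm.
Variables (R : realDomainType) (d : nat -> nat) (L : nat).
Hypothesis L_gt0 : (0 < L)%N.
Let predL_lt : (L.-1 < L)%N. Proof. by rewrite ltn_predL. Qed.

Definition rnn_sub (t1 t2 : rnn R d) : rnn R d :=
  @RNN R d (fun l => Wff t1 l - Wff t2 l) (fun l => Wrec t1 l - Wrec t2 l)
           (fun l => bias t1 l - bias t2 l).

Definition layer_norm2 (t : rnn R d) l :=
  frob2 (Wrec t l) + frob2 (Wff t l.-1) + frob2 (bias t l.-1).

Lemma rnn_norm2E (t : rnn R d) : rnn_norm2 L t =
  frob2 (Wff t L.-1) + frob2 (bias t L.-1) + \sum_(1 <= l < L) layer_norm2 t l.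
Proof. by []. Qed.

Lemma layer_norm2_ge0 (t : rnn R d) l : 0 <= layer_norm2 t l.
Proof. by rewrite !addr_ge0 ?frob2_ge0. Qed.

Lemma rnn_norm2_ext (t1 t2 : rnn R d) :
  (forall l, (l < L)%N -> [/\ frob2 (Wff t1 l) = frob2 (Wff t2 l),
     frob2 (Wrec t1 l.+1) = frob2 (Wrec t2 l.+1) &
     frob2 (bias t1 l) = frob2 (bias t2 l)]) ->
  rnn_norm2 L t1 = rnn_norm2 L t2.
Proof.
move=> t12; rewrite !rnn_norm2E.
have [-> _ ->] := t12 _ predL_lt.
congr (_ + _); apply: eq_big_nat => l /andP[l_gt0 lL].
have [eWff eWrec ebias] := t12 _ (leq_ltn_trans (leq_pred l) lL).
by rewrite prednK // in eWrec; rewrite /layer_norm2 eWff eWrec ebias.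
Qed.

Lemma rnn_norm2_eq (t1 t2 : rnn R d) : rnn_eq L t1 t2 -> rnn_norm2 L t1 = rnn_norm2 L t2.
Proof. by move=> t12; apply: rnn_norm2_ext => l /t12[-> [-> ->]]. Qed.

Lemma rnn_norm2_ge0 (t : rnn R d) : 0 <= rnn_norm2 L t.
Proof.
by rewrite rnn_norm2E !addr_ge0 ?frob2_ge0 // sumr_ge0 // => l _; apply: layer_norm2_ge0.
Qed.

Lemma frob2_bias_le_norm2 (t : rnn R d) k : (k < L)%N ->
  frob2 (bias t k) <= rnn_norm2 L t.
Proof.
move=> kL; rewrite rnn_norm2E.
have := frob2_ge0 (Wff t L.-1); have := frob2_ge0 (bias t L.-1).
have [-> *|kL1] := eqVneq k L.-1.
  have : 0 <= \sum_(1 <= l < L) layer_norm2 t l.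
    by apply: sumr_ge0 => l _; apply: layer_norm2_ge0.
  lra.
have k1_in : k.+1 \in index_iota 1 L.
  by rewrite mem_index_iota /= -(prednK L_gt0) ltnS ltn_neqAle kL1 -ltnS prednK.
rewrite (bigD1_seq _ k1_in (iota_uniq _ _)) /=.
have : 0 <= \sum_(l <- index_iota 1 L | l != k.+1) layer_norm2 t l.
  by apply: sumr_ge0 => l _; apply: layer_norm2_ge0.
have := frob2_ge0 (Wrec t k.+1); have := frob2_ge0 (Wff t k).
rewrite /layer_norm2 /=; lra.
Qed.

Lemma rnn_norm2_polar (A B C : rnn R d) :
  (forall l, (l < L)%N -> [/\
    forall i j, Wff C l i j ^+ 2 = Wff A l i j * Wff B l i j,
    forall i j, Wrec C l.+1 i j ^+ 2 = Wrec A l.+1 i j * Wrec B l.+1 i j &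
    forall i j, bias C l i j ^+ 2 = bias A l i j * bias B l i j]) ->
  rnn_norm2 L A + rnn_norm2 L B = rnn_norm2 L C *+ 2 + rnn_norm2 L (rnn_sub A B).
Proof.
move=> ABC; rewrite !rnn_norm2E /=.
have [/frob2_polar WffL _ /frob2_polar biasL] := ABC _ predL_lt.
have layers : \sum_(1 <= l < L) layer_norm2 A l + \sum_(1 <= l < L) layer_norm2 B l =
    (\sum_(1 <= l < L) layer_norm2 C l) *+ 2 + \sum_(1 <= l < L) layer_norm2 (rnn_sub A B) l.
  rewrite -big_split -sumrMnl -big_split /=; apply: eq_big_nat => l /andP[l_gt0 lL].
  have [/frob2_polar Wffl Wrecl /frob2_polar biasl] :=
    ABC _ (leq_ltn_trans (leq_pred l) lL).
  rewrite prednK // in Wrecl; have := frob2_polar Wrecl.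
  rewrite /layer_norm2 /=; lra.
lra.
Qed.

End RNNNorm.

Section Action.
Variables (R : comUnitRingType) (d : nat -> nat) (L : nat).

Lemma invmxM n (A B : 'M[R]_n) : A \in unitmx -> B \in unitmx ->
  invmx (A *m B) = invmx B *m invmx A.
Proof.
move=> uA uB; have uAB : A *m B \in unitmx by rewrite unitmx_mul uA.
rewrite -[RHS]mul1mx -(mulVmx uAB) -!mulmxA (mulmxA B) mulmxV // mul1mx.
by rewrite mulmxV // mulmx1.
Qed.

Lemma rnn_act_divr (P1 P2 : mxseq R d) (t t1 t2 : rnn R d) :
  (forall l, (l <= L)%N -> P1 l \in unitmx) ->
  (forall l, (l <= L)%N -> P2 l \in unitmx) ->
  rnn_eq L t1 (rnn_act P1 t) -> rnn_eq L t2 (rnn_act P2 t) ->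
  rnn_eq L t1 (rnn_act (fun l => P1 l *m invmx (P2 l)) t2).
Proof.
move=> u1 u2 e1 e2 l lL /=.
have [-> [-> ->]] := e1 l lL; have [-> [-> ->]] := e2 l lL.
have quotK k : (k <= L)%N -> P1 k *m invmx (P2 k) *m P2 k = P1 k.
  by move=> kL; rewrite mulmxKV ?u2.
have invmx_quot k : (k <= L)%N -> invmx (P2 k) *m invmx (P1 k *m invmx (P2 k)) = invmx (P1 k).
  move=> kL; rewrite -invmxM ?quotK ?u2 //.
  by rewrite unitmx_mul unitmx_inv u1 ?u2.
rewrite /= !mulmxA !quotK ?(ltnW lL) //.
by rewrite -!mulmxA !invmx_quot ?(ltnW lL).
Qed.

End Action.

Section ScaledGroup.
Variables (R : numFieldType) (d : nat -> nat) (L : nat).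

Definition diag_seq (del : forall l, 'rV[R]_(d l)) : mxseq R d := fun l => diag_mx (del l).

Lemma Gscaled_decomp (P : mxseq R d) : in_Gscaled L P -> forall l, (l <= L)%N ->
  (forall i, 0 < col_sums (P l) 0 i) /\
  exists s, P l = perm_mx s *m diag_mx (col_sums (P l)).
Proof.
move=> [[P0 [PL _]] Pdec] l lL.
suff [s [D [D_gt0 ->]]] : exists s (D : 'rV[R]_(d l)),
    (forall i, 0 < D 0 i) /\ P l = perm_mx s *m diag_mx D.
  by rewrite col_sums_perm_diag; split; last exists s.
have one_dec n : exists s (D : 'rV[R]_n),
    (forall i, 0 < D 0 i) /\ 1%:M = perm_mx s *m diag_mx D.
  exists 1%g, (const_mx 1); rewrite perm_mx1 mul1mx diag_const_mx.
  by split => // i; rewrite mxE.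
have [->|l_neq0] := eqVneq l 0%N; first by rewrite P0.
have [->|l_neqL] := eqVneq l L; first by rewrite PL.
by apply: Pdec; rewrite lt0n l_neq0 ltn_neqAle l_neqL lL.
Qed.

Lemma Gscaled_unitmx (P : mxseq R d) : in_Gscaled L P ->
  forall l, (l <= L)%N -> P l \in unitmx.
Proof.
move=> PG l lL; have [D_gt0 [s ->]] := Gscaled_decomp PG lL.
by apply: perm_diag_unit => i; rewrite gt_eqF.
Qed.

Lemma Gscaled_diag (del : forall l, 'rV[R]_(d l)) :
  del 0%N = const_mx 1 -> del L = const_mx 1 ->
  (forall l, (0 < l < L)%N -> forall i, 0 < del l 0 i) ->
  in_Gscaled L (diag_seq del).
Proof.
move=> del0 delL del_gt0; split; last first.
  by move=> l lL; exists 1%g, (del l); rewrite perm_mx1 mul1mx; split => //; apply: del_gt0.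
rewrite /in_Glin /diag_seq del0 delL !diag_const_mx.
split=> //; split=> // l lL.
by rewrite -[diag_mx _]mul1mx -perm_mx1 perm_diag_unit // => i; rewrite gt_eqF ?del_gt0.
Qed.

Lemma Gperm_divr (P1 P2 : mxseq R d) : in_Gscaled L P1 -> in_Gscaled L P2 ->
  (forall l, (0 < l < L)%N -> col_sums (P1 l) = col_sums (P2 l)) ->
  in_Gperm L (fun l => P1 l *m invmx (P2 l)).
Proof.
move=> G1 G2 sums12; have [[P10 [P1L _]] _] := G1; have [[P20 [P2L _]] _] := G2.
split; first split; [|split|].
- by rewrite P10 P20 invmx1 mulmx1.
- by rewrite P1L P2L invmx1 mulmx1.
- move=> l /andP[_ /ltnW lL].
  by rewrite unitmx_mul unitmx_inv !(Gscaled_unitmx _ lL).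
- move=> l l_mid; have lL : (l <= L)%N by case/andP: l_mid => _ /ltnW.
  have [_ [s1 ->]] := Gscaled_decomp G1 lL; have [D2_gt0 [s2 ->]] := Gscaled_decomp G2 lL.
  rewrite sums12 // perm_diag_divr ?perm_mx_is_perm // => i.
  by rewrite gt_eqF.
Qed.

End ScaledGroup.

Section DiagonalScaling.
Variables (R : rcfType) (d : nat -> nat) (L : nat).
Hypothesis L_gt0 : (0 < L)%N.

Lemma rnn_norm2_act_perm_diag (P : mxseq R d) (del : forall l, 'rV[R]_(d l))
    (t : rnn R d) :
  (forall l, (l <= L)%N -> forall i, del l 0 i != 0) ->
  (forall l, (l <= L)%N -> exists s, P l = perm_mx s *m diag_mx (del l)) ->
  rnn_norm2 L (rnn_act P t) = rnn_norm2 L (rnn_act (diag_seq del) t).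
Proof.
move=> del_neq0 Pdec; apply: rnn_norm2_ext => // l lL /=.
have [s0 ->] := Pdec l (ltnW lL); have [s1 ->] := Pdec l.+1 lL.
have nz0 := del_neq0 _ (ltnW lL); have nz1 := del_neq0 _ lL.
split; [exact: frob2_perm_diag_conj | exact: frob2_perm_diag_conj |].
by rewrite -mulmxA frob2_perml.
Qed.

Lemma rnn_norm2_act_Gscaled (P : mxseq R d) (t : rnn R d) : in_Gscaled L P ->
  rnn_norm2 L (rnn_act P t) =
  rnn_norm2 L (rnn_act (diag_seq (fun l => col_sums (P l))) t).
Proof.
move=> PG; apply: rnn_norm2_act_perm_diag => l lL; have [D_gt0 Pdec] := Gscaled_decomp PG lL.
  by move=> i; rewrite gt_eqF.
exact: Pdec.
Qed.

Lemma Gscaled_geomean (P1 P2 : mxseq R d) : in_Gscaled L P1 -> in_Gscaled L P2 ->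
  in_Gscaled L (diag_seq (fun l => geomean (col_sums (P1 l)) (col_sums (P2 l)))).
Proof.
move=> G1 G2; have [[P10 [P1L _]] _] := G1; have [[P20 [P2L _]] _] := G2.
apply: Gscaled_diag => [||l /andP[_ /ltnW lL]].
- by rewrite P10 P20 -diag_const_mx col_sums_diag geomean1.
- by rewrite P1L P2L -diag_const_mx col_sums_diag geomean1.
- exact: geomean_gt0 (Gscaled_decomp G1 lL).1 (Gscaled_decomp G2 lL).1.
Qed.

Lemma rnn_norm2_diag_geomean (e1 e2 : forall l, 'rV[R]_(d l)) (t : rnn R d) :
  (forall l, (l <= L)%N -> forall i, 0 < e1 l 0 i) ->
  (forall l, (l <= L)%N -> forall i, 0 < e2 l 0 i) ->
  rnn_norm2 L (rnn_act (diag_seq e1) t) + rnn_norm2 L (rnn_act (diag_seq e2) t) =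
  rnn_norm2 L (rnn_act (diag_seq (fun l => geomean (e1 l) (e2 l))) t) *+ 2 +
  rnn_norm2 L (rnn_sub (rnn_act (diag_seq e1) t) (rnn_act (diag_seq e2) t)).
Proof.
move=> e1_gt0 e2_gt0; apply: rnn_norm2_polar => // l lL.
have e1l := e1_gt0 _ (ltnW lL); have e2l := e2_gt0 _ (ltnW lL).
have e1l1 := e1_gt0 _ lL; have e2l1 := e2_gt0 _ lL.
by split=> i j; [exact: sqr_geomean_conj | exact: sqr_geomean_conj |
  exact: sqr_geomean_mull].
Qed.

Lemma diag_scalings_eq (e1 e2 : forall l, 'rV[R]_(d l)) (t : rnn R d) :
  (forall l, (l < L)%N -> forall i, bias t l i 0 != 0) ->
  rnn_norm2 L (rnn_sub (rnn_act (diag_seq e1) t) (rnn_act (diag_seq e2) t)) = 0 ->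
  forall k, (k < L)%N -> e1 k.+1 = e2 k.+1.
Proof.
move=> bias_neq0 diff0 k kL.
have /frob2_eq0 /matrixP bias_diff0 : frob2 (bias (rnn_sub
    (rnn_act (diag_seq e1) t) (rnn_act (diag_seq e2) t)) k) = 0.
  by apply/eqP; rewrite eq_le frob2_ge0 -diff0 frob2_bias_le_norm2.
apply/matrixP => i j; rewrite ord1; move: (bias_diff0 j 0).
rewrite /= /diag_seq !mul_diag_mx !mxE => /eqP; rewrite subr_eq0 => /eqP.
exact/(mulIf (bias_neq0 k kL j)).
Qed.

End DiagonalScaling.

Section Minimizers.
Variables (R : realType) (d : nat -> nat) (L : nat) (t : rnn R d).
Hypothesis L_gt0 : (0 < L)%N.
Hypothesis bias_neq0 : forall l, (l < L)%N -> forall i, bias t l i 0 != 0.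

Lemma minimizers_col_sums_eq (t1 t2 : rnn R d) (P1 P2 : mxseq R d) :
  in_Gscaled L P1 -> in_Gscaled L P2 ->
  rnn_eq L t1 (rnn_act P1 t) -> rnn_eq L t2 (rnn_act P2 t) ->
  (forall P, in_Gscaled L P -> rnn_norm L t1 <= rnn_norm L (rnn_act P t)) ->
  (forall P, in_Gscaled L P -> rnn_norm L t2 <= rnn_norm L (rnn_act P t)) ->
  forall l, (0 < l < L)%N -> col_sums (P1 l) = col_sums (P2 l).
Proof.
move=> G1 G2 E1 E2 min1 min2.
pose e1 l := col_sums (P1 l); pose e2 l := col_sums (P2 l).
have e1_gt0 l (lL : (l <= L)%N) := (Gscaled_decomp G1 lL).1.
have e2_gt0 l (lL : (l <= L)%N) := (Gscaled_decomp G2 lL).1.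
pose act e := rnn_act (diag_seq e) t; pose N := @rnn_norm2 R d L.
have le_N t3 t4 : rnn_norm L t3 <= rnn_norm L t4 -> N t3 <= N t4.
  by rewrite /rnn_norm ler_sqrt ?rnn_norm2_ge0.
have N1 : N t1 = N (act e1).
  by rewrite /N (rnn_norm2_eq L_gt0 E1) (rnn_norm2_act_Gscaled L_gt0).
have N2 : N t2 = N (act e2).
  by rewrite /N (rnn_norm2_eq L_gt0 E2) (rnn_norm2_act_Gscaled L_gt0).
have N12 : N t1 <= N t2 by rewrite /N (rnn_norm2_eq L_gt0 E2) le_N ?min1.
have N21 : N t2 <= N t1 by rewrite /N (rnn_norm2_eq L_gt0 E1) le_N ?min2.
pose gm l := geomean (e1 l) (e2 l).
have N1gm : N t1 <= N (act gm) by apply/le_N/min1/Gscaled_geomean.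
have polar := rnn_norm2_diag_geomean L_gt0 t e1_gt0 e2_gt0.
rewrite -/N -/gm -/(act e1) -/(act e2) -/(act gm) in polar.
have diff_ge0 : 0 <= N (rnn_sub (act e1) (act e2)) by apply: rnn_norm2_ge0.
have diff0 : N (rnn_sub (act e1) (act e2)) = 0 by lra.
case=> // k /andP[_ /ltnW kL]; exact: (diag_scalings_eq L_gt0 bias_neq0 diff0 kL).
Qed.

End Minimizers.

Theorem mainTheorem4 (R : realType) (L : nat) (d : nat -> nat) (t : rnn R d)
  (hL : (0 < L)%N)
  (hb : forall l, (l < L)%N -> forall i, bias t l i 0 != 0) :
  forall t' t'' : rnn R d, in_X L t t' -> in_X L t t'' ->
  exists P : mxseq R d, in_Gperm L P /\ rnn_eq L t' (rnn_act P t'').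
Proof.
move=> t' t'' [[P1 [G1 E1]] min1] [[P2 [G2 E2]] min2].
exists (fun l => P1 l *m invmx (P2 l)); split.
  by apply: Gperm_divr => //; apply: (minimizers_col_sums_eq hL hb G1 G2 E1 E2).
by apply: (rnn_act_divr _ _ E1 E2) => l; apply: Gscaled_unitmx.
Qed.
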